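(* Let $H$ be a weak Hopf algebra, $A$ a symmetric partial $H$-module algebra, $B$ an algebra, $\pi\colon H\to B$ a partial representation and $\phi\colon A\to B$ an algebra morphism such that $(\phi,\pi)$ is a covariant pair. Then there exists a unique algebra morphism $\Phi\colon A\,\underline{\#}\,H\to B$ such that $\Phi\circ\pi_0=\pi$ and $\Phi\circ\phi_0=\phi$, where $\pi_0\colon H\to A\,\underline{\#}\,H$, $\pi_0(h)=1_A\,\underline{\#}\,h$, and $\phi_0\colon A\to A\,\underline{\#}\,H$, $\phi_0(a)=a\,\underline{\#}\,1_H$.
   Context: All algebras are associative and unital over a field $\Bbbk$; Sweedler notation $\Delta(h)=h_1\otimes h_2$, $\Delta(1_H)=1_1\otimes1_2$. A weak Hopf algebra is $(H,m,u,\Delta,\varepsilon,S)$ with $H$ an algebra, $(H,\Delta,\varepsilon)$ a coalgebra, and for all $g,h,k$: $\Delta(kh)=\Delta(k)\Delta(h)$; $\varepsilon(kh_1)\varepsilon(h_2g)=\varepsilon(khg)=\varepsilon(kh_2)\varepsilon(h_1g)$; $(1\otimes\Delta(1))(\Delta(1)\otimes1)=\Delta^2(1)=(\Delta(1)\otimes1)(1\otimes\Delta(1))$; $h_1S(h_2)=\varepsilon_t(h)$; $S(h_1)h_2=\varepsilon_s(h)$; $S(h)=S(h_1)h_2S(h_3)$, with $\varepsilon_t(h)=\varepsilon(1_1h)1_2$, $\varepsilon_s(h)=1_1\varepsilon(h1_2)$. $H_t=\varepsilon_t(H)$, $H_s=\varepsilon_s(H)$, and the restriction $S_R\colon H_s\to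 H_t$ of $S$ is bijective. Partial representation of $H$ in $B$: a linear $\pi\colon H\to B$ with (PR1) $\pi(1_H)=1_B$; (PR2) $\pi(h)\pi(k_1)\pi(S(k_2))=\pi(hk_1)\pi(S(k_2))$; (PR3) $\pi(h)\pi(S(k_1))\pi(k_2)=\pi(hS(k_1))\pi(k_2)$; (PR4) $\pi(h_1)\pi(S(h_2))\pi(k)=\pi(h_1)\pi(S(h_2)k)$; (PR5) $\pi(S(h_1))\pi(h_2)\pi(k)=\pi(S(h_1))\pi(h_2k)$; (PR6) $\pi(h)=\pi(h_1)\pi(S(h_2))\pi(h_3)$. Partial $H$-module algebra: algebra $A$ with linear $h\otimes a\mapsto h\cdot a$ such that $h\cdot(ab)=(h_1\cdot a)(h_2\cdot b)$, $1_H\cdot a=a$, $h\cdot(k\cdot a)=(h_1\cdot1_A)((h_2k)\cdot a)$; symmetric if also $h\cdot(k\cdot a)=((h_1k)\cdot a)(h_2\cdot1_A)$. Smash product $A\#H=A\otimes_{H_t}H$ ($A$ a right $H_t$-module via $a\triangleleft z=a(S_R^{-1}(z)\cdot1_A)$, $H$ a left $H_t$-module by multiplication) with product $(a\#h)(b\#g)=a(h_1\cdot b)\#h_2g$. Partial smash product $A\,\underline{\#}\,H$: the subalgebra generated by $a\,\underline{\#}\,h:=(a\#h)(1_A\#1_H)=a(h_1\cdot1_A)\#h_2$, with unit $1_A\,\underline{\#}\,1_H$. Covariant pair: a pair $(\phi,\pi)$ with $\phi\colon A\to B$ an algebra morphism and $\pi\colon H\to B$ a partial representation such that for all $h\in H$,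 $a\in A$: (CP1) $\phi(h\cdot a)=\pi(h_1)\phi(a)\pi(S(h_2))$; (CP2) $\phi(a)\pi(S(h_1))\pi(h_2)=\pi(S(h_1))\pi(h_2)\phi(a)$. *)

(* Tensors are represented by finite formal sums (seq of pairs/triples);
   equality of tensors is the universal property of the tensor product
   (equal images under every multilinear map into every K-vector space). *)
From HB Require Import structures.
From mathcomp Require Import all_boot all_order all_algebra.
Set Implicit Arguments. Unset Strict Implicit. Unset Printing Implicit Defensive.
Import GRing.Theory.
Local Open Scope ring_scope.

(* Associative unital K-algebras: MathComp's algType (requires 1 != 0). *)

Definition sw2 (U V : Type) (W : nmodType) (s : seq (U * V)) (f : U -> V -> W) : W :=
  \sum_(p <- s) f p.1 p.2.
Definition sw3 (U V X : Type) (W : nmodType) (s : seq (U * V * X))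
  (f : U -> V -> X -> W) : W := \sum_(p <- s) f p.1.1 p.1.2 p.2.

Definition bilin (K : pzRingType) (U V W : lmodType K) (f : U -> V -> W) : Prop :=
  (forall v (a : K) u1 u2, f (a *: u1 + u2) v = a *: f u1 v + f u2 v) /\
  (forall u (a : K) v1 v2, f u (a *: v1 + v2) = a *: f u v1 + f u v2).

Definition trilin (K : pzRingType) (U V X W : lmodType K) (f : U -> V -> X -> W) : Prop :=
  (forall v x (a : K) u1 u2, f (a *: u1 + u2) v x = a *: f u1 v x + f u2 v x) /\
  (forall u x (a : K) v1 v2, f u (a *: v1 + v2) x = a *: f u v1 x + f u v2 x) /\
  (forall u v (a : K) x1 x2, f u v (a *: x1 + x2) = a *: f u v x1 + f u v x2).

Definition teq2 (K : pzRingType) (U V : lmodType K) (s t : seq (U * V)) : Prop :=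
  forall (W : lmodType K) (f : U -> V -> W), bilin f -> sw2 s f = sw2 t f.
Definition teq3 (K : pzRingType) (U V X : lmodType K) (s t : seq (U * V * X)) : Prop :=
  forall (W : lmodType K) (f : U -> V -> X -> W), trilin f -> sw3 s f = sw3 t f.

Definition tmul2 (K : pzRingType) (H : algType K) (s t : seq (H * H)) : seq (H * H) :=
  [seq (p.1 * q.1, p.2 * q.2) | p <- s, q <- t].
Definition tmul3 (K : pzRingType) (H : algType K) (s t : seq (H * H * H)) :
  seq (H * H * H) :=
  [seq (p.1.1 * q.1.1, p.1.2 * q.1.2, p.2 * q.2) | p <- s, q <- t].
Definition comul_l (K : pzRingType) (H : algType K) (D : H -> seq (H * H))
  (s : seq (H * H)) : seq (H * H * H) :=
  flatten [seq [seq (q.1, q.2, p.2) | q <- D p.1] | p <- s].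
Definition comul_r (K : pzRingType) (H : algType K) (D : H -> seq (H * H))
  (s : seq (H * H)) : seq (H * H * H) :=
  flatten [seq [seq (p.1, q.1, q.2) | q <- D p.2] | p <- s].
Definition comul2 (K : pzRingType) (H : algType K) (D : H -> seq (H * H)) (h : H) :=
  comul_l D (D h).
Definition one_comul1 (K : pzRingType) (H : algType K) (D : H -> seq (H * H)) :
  seq (H * H * H) := [seq (1, p.1, p.2) | p <- D 1].
Definition comul1_one (K : pzRingType) (H : algType K) (D : H -> seq (H * H)) :
  seq (H * H * H) := [seq (p.1, p.2, 1) | p <- D 1].

Definition eps_t (K : pzRingType) (H : algType K) (D : H -> seq (H * H))
  (e : H -> K) (h : H) : H := sw2 (D 1) (fun u v => e (u * h) *: v).
Definition eps_s (K : pzRingType) (H : algType K) (D : H -> seq (H * H))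
  (e : H -> K) (h : H) : H := sw2 (D 1) (fun u v => e (h * v) *: u).

Record weak_hopf (K : fieldType) (H : algType K) (D : H -> seq (H * H))
    (e : H -> K) (S : H -> H) : Prop := {
  wh_comul_lin : forall (a : K) h g,
    teq2 (D (a *: h + g)) ([seq (a *: p.1, p.2) | p <- D h] ++ D g);
  wh_counit_lin : forall (a : K) h g, e (a *: h + g) = a * e h + e g;
  wh_antipode_lin : forall (a : K) h g, S (a *: h + g) = a *: S h + S g;
  wh_coassoc : forall h, teq3 (comul_l D (D h)) (comul_r D (D h));
  wh_counit_l : forall h, sw2 (D h) (fun u v => e u *: v) = h;
  wh_counit_r : forall h, sw2 (D h) (fun u v => e v *: u) = h;
  wh_comul_mul : forall k h, teq2 (D (k * h)) (tmul2 (D k) (D h));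
  wh_eps_mul1 : forall k h g,
    sw2 (D h) (fun u v => e (k * u) * e (v * g)) = e (k * h * g);
  wh_eps_mul2 : forall k h g,
    sw2 (D h) (fun u v => e (k * v) * e (u * g)) = e (k * h * g);
  wh_comul_unit1 : teq3 (tmul3 (one_comul1 D) (comul1_one D)) (comul2 D 1);
  wh_comul_unit2 : teq3 (comul2 D 1) (tmul3 (comul1_one D) (one_comul1 D));
  wh_antipode_t : forall h, sw2 (D h) (fun u v => u * S v) = eps_t D e h;
  wh_antipode_s : forall h, sw2 (D h) (fun u v => S u * v) = eps_s D e h;
  wh_antipode3 : forall h, sw3 (comul2 D h) (fun u v w => S u * v * S w) = S h
}.

Record partial_rep (K : fieldType) (H B : algType K) (D : H -> seq (H * H))
    (S : H -> H) (pi : H -> B) : Prop := {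
  pr_lin : forall (a : K) h g, pi (a *: h + g) = a *: pi h + pi g;
  pr1 : pi 1 = 1;
  pr2 : forall h k, sw2 (D k) (fun u v => pi h * pi u * pi (S v))
                  = sw2 (D k) (fun u v => pi (h * u) * pi (S v));
  pr3 : forall h k, sw2 (D k) (fun u v => pi h * pi (S u) * pi v)
                  = sw2 (D k) (fun u v => pi (h * S u) * pi v);
  pr4 : forall h k, sw2 (D h) (fun u v => pi u * pi (S v) * pi k)
                  = sw2 (D h) (fun u v => pi u * pi (S v * k));
  pr5 : forall h k, sw2 (D h) (fun u v => pi (S u) * pi v * pi k)
                  = sw2 (D h) (fun u v => pi (S u) * pi (v * k));
  pr6 : forall h, pi h = sw3 (comul2 D h) (fun u v w => pi u * pi (S v) * pi w)
}.

Record partial_module_algebra (K : fieldType) (H A : algType K)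
    (D : H -> seq (H * H)) (act : H -> A -> A) : Prop := {
  pma_bilin : bilin act;
  pma_mul : forall h a b, act h (a * b) = sw2 (D h) (fun u v => act u a * act v b);
  pma_unit : forall a, act 1 a = a;
  pma_assoc : forall h k a,
    act h (act k a) = sw2 (D h) (fun u v => act u 1 * act (v * k) a)
}.
Definition sym_partial_module_algebra (K : fieldType) (H A : algType K)
    (D : H -> seq (H * H)) (act : H -> A -> A) : Prop :=
  partial_module_algebra D act /\
  (forall h k a, act h (act k a) = sw2 (D h) (fun u v => act (u * k) a * act v 1)).

Definition alg_morph (K : fieldType) (A B : algType K) (f : A -> B) : Prop :=
  (forall (c : K) a b, f (c *: a + b) = c *: f a + f b) /\
  (forall a b, f (a * b) = f a * f b) /\ f 1 = 1.

Definition covariant_pair (K : fieldType) (H A B : algType K)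
    (D : H -> seq (H * H)) (S : H -> H) (act : H -> A -> A)
    (phi : A -> B) (pi : H -> B) : Prop :=
  alg_morph phi /\ partial_rep D S pi /\
  (forall h a, phi (act h a) = sw2 (D h) (fun u v => pi u * phi a * pi (S v))) /\
  (forall h a, sw2 (D h) (fun u v => phi a * pi (S u) * pi v)
             = sw2 (D h) (fun u v => pi (S u) * pi v * phi a)).

(* A is a right H_t-module via a <| z = a (S_R^{-1}(z) . 1_A); writing z = S(y)
   with y = eps_s(x) in H_s, the balancing relation (a <| z) (x) h = a (x) z h reads
   a (y . 1_A) (x) h = a (x) S(y) h. *)
Definition smash_balanced (K : fieldType) (H A : algType K) (D : H -> seq (H * H))
    (e : H -> K) (S : H -> H) (act : H -> A -> A) (W : lmodType K)
    (f : A -> H -> W) : Prop :=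
  forall x a h, f (a * act (eps_s D e x) 1) h = f a (S (eps_s D e x) * h).

Definition smash_eq (K : fieldType) (H A : algType K) (D : H -> seq (H * H))
    (e : H -> K) (S : H -> H) (act : H -> A -> A) (s t : seq (A * H)) : Prop :=
  forall (W : lmodType K) (f : A -> H -> W),
    bilin f -> smash_balanced D e S act f -> sw2 s f = sw2 t f.

(* (a # h)(b # g) = a (h_1 . b) # h_2 g, extended bilinearly *)
Definition smash_mul (K : fieldType) (H A : algType K) (D : H -> seq (H * H))
    (act : H -> A -> A) (s t : seq (A * H)) : seq (A * H) :=
  flatten [seq flatten [seq [seq (p.1 * act r.1 q.1, r.2 * q.2) | r <- D p.2]
                       | q <- t] | p <- s].

Definition smash_scale (K : fieldType) (H A : algType K) (c : K) (s : seq (A * H)) :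
  seq (A * H) := [seq (c *: p.1, p.2) | p <- s].

(* a #_ h := (a # h)(1_A # 1_H) = a (h_1 . 1_A) # h_2 *)
Definition psmash_gen (K : fieldType) (H A : algType K) (D : H -> seq (H * H))
    (act : H -> A -> A) (a : A) (h : H) : seq (A * H) :=
  [seq (a * act p.1 1, p.2) | p <- D h].

Inductive in_psmash (K : fieldType) (H A : algType K) (D : H -> seq (H * H))
    (e : H -> K) (S : H -> H) (act : H -> A -> A) : seq (A * H) -> Prop :=
| ps_gen a h : in_psmash D e S act (psmash_gen D act a h)
| ps_zero : in_psmash D e S act [::]
| ps_add s t : in_psmash D e S act s -> in_psmash D e S act t ->
    in_psmash D e S act (s ++ t)
| ps_scale (c : K) s : in_psmash D e S act s ->
    in_psmash D e S act (smash_scale c s)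
| ps_mul s t : in_psmash D e S act s -> in_psmash D e S act t ->
    in_psmash D e S act (smash_mul D act s t)
| ps_eq s t : in_psmash D e S act s -> smash_eq D e S act s t ->
    in_psmash D e S act t.

(* Phi : A #_ H -> B is an algebra morphism (given on representatives; it
   must be well defined on classes); the unit of A #_ H is 1_A #_ 1_H. *)
Definition psmash_alg_morph (K : fieldType) (H A B : algType K)
    (D : H -> seq (H * H)) (e : H -> K) (S : H -> H) (act : H -> A -> A)
    (Phi : seq (A * H) -> B) : Prop :=
  (forall s t, in_psmash D e S act s -> smash_eq D e S act s t -> Phi s = Phi t) /\
  (forall s t, in_psmash D e S act s -> in_psmash D e S act t ->
     Phi (s ++ t) = Phi s + Phi t) /\
  (forall (c : K) s, in_psmash D e S act s -> Phi (smash_scale c s) = c *: Phi s) /\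
  (forall s t, in_psmash D e S act s -> in_psmash D e S act t ->
     Phi (smash_mul D act s t) = Phi s * Phi t) /\
  Phi (psmash_gen D act 1 1) = 1.

(* The morphism is [Phi (a # h) = phi a * pi h], defined on all of
   [A # H = A (x)_{H_t} H].  It respects the balancing because for [y] in [H_s]
   covariance gives [phi (y . 1_A) = pi (S y)], while [S y] lies in [H_t] and
   [pi (z k) = pi z * pi k] for [z] in [H_t] (by PR6 and PR2).  It is
   multiplicative because CP1, CP2, PR5 and PR6 give
   [sum phi (h_1 . b) * pi (h_2 g) = pi h * phi b * pi g].  Uniqueness holds
   because [a #_ h = (a #_ 1) (1 #_ h)], so the partial smash product is
   generated by the images of [phi_0] and [pi_0]. *)

From HB Require Import structures.
From mathcomp Require Import all_boot all_order all_algebra.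
From mathcomp Require Import ring.
Set Implicit Arguments. Unset Strict Implicit. Unset Printing Implicit Defensive.
Import GRing.Theory.
Local Open Scope ring_scope.

Lemma sw2E (U V : Type) (W : nmodType) (s : seq (U * V)) (f : U -> V -> W) :
  sw2 s f = \sum_(p <- s) f p.1 p.2.
Proof. by []. Qed.

Section Multilinear.
Variable R : pzRingType.
Implicit Types U V X W : lmodType R.

Lemma linear_fun0 U W (f : U -> W) : linear f -> f 0 = 0.
Proof.
move=> lf; have := lf 1 0 0; rewrite !scale1r addr0 => f00.
by apply: (@addrI _ (f 0)); rewrite addr0 -f00.
Qed.

Lemma linear_funD U W (f : U -> W) : linear f -> forall u v, f (u + v) = f u + f v.
Proof. by move=> lf u v; have := lf 1 u v; rewrite !scale1r. Qed.

Lemma linear_funZ U W (f : U -> W) : linear f -> forall a u, f (a *: u) = a *: f u.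
Proof. by move=> lf a u; rewrite -(addr0 (a *: u)) lf linear_fun0 // addr0. Qed.

Lemma linear_fun_sum U W (f : U -> W) (I : Type) (r : seq I) (F : I -> U) :
  linear f -> f (\sum_(i <- r) F i) = \sum_(i <- r) f (F i).
Proof.
move=> lf; elim: r => [|x r IH]; first by rewrite !big_nil linear_fun0.
by rewrite !big_cons linear_funD // IH.
Qed.

Lemma bilin_linl U V W (f : U -> V -> W) v : bilin f -> linear (f ^~ v).
Proof. by case=> fl _ a u1 u2; rewrite fl. Qed.

Lemma bilin_linr U V W (f : U -> V -> W) u : bilin f -> linear (f u).
Proof. by case=> _ fr a v1 v2; rewrite fr. Qed.

Lemma trilin_sum U V X W (I : Type) (r : seq I) (F : I -> U -> V -> X -> W) :
  (forall i, trilin (F i)) -> trilin (fun u v x => \sum_(i <- r) F i u v x).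
Proof.
move=> tF; split; [|split] => *; rewrite scaler_sumr -big_split; apply: eq_bigr => i _.
- by case: (tF i) => [f1 _]; rewrite f1.
- by case: (tF i) => [_ [f2 _]]; rewrite f2.
- by case: (tF i) => [_ [_ f3]]; rewrite f3.
Qed.

End Multilinear.

Lemma scaler_mull (R : pzRingType) (A : lalgType R) (a : R) (u v : A) :
  a *: u * v = a *: (u * v).
Proof. by rewrite scalerAl. Qed.

Lemma scaler_mulr (R : pzRingType) (A : algType R) (a : R) (u v : A) :
  u * (a *: v) = a *: (u * v).
Proof. by rewrite scalerAr. Qed.

Lemma scalerM (R : pzRingType) (V : lmodType R) (a b : R) (v : V) :
  (a * b) *: v = a *: (b *: v).
Proof. by rewrite scalerA. Qed.

Lemma scalerC (R : comPzRingType) (V : lmodType R) (a b : R) (v : V) :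
  a *: (b *: v) = b *: (a *: v).
Proof. by rewrite !scalerA mulrC. Qed.

(* Proves goals [linear f], [bilin f], [trilin f] for explicit [f], given the
   linearity equations [rules] of the maps occurring in [f]. *)
Ltac multilinear rules :=
  rewrite ?/trilin ?/bilin;
  repeat match goal with
  | |- _ /\ _ => split
  | |- forall _, _ => intro
  | |- linear _ => move=> ? ? ?
  end;
  rewrite /= ?(rules, mulrDl, mulrDr, scalerDl, scalerDr, scaler_mull, scaler_mulr,
               scalerM); try done;
  try (by rewrite scalerC); try (by rewrite [in RHS]scalerC);
  try (rewrite !scalerA; congr (_ + _); congr (_ *: _); ring).

(* Rewriting with an instance of a Sweedler-sum identity whose summand is an
   explicit [fun]: the instance must be beta-reduced first. *)
Ltac rewrite_beta E :=
  let h := fresh in have h := E; cbv beta in h; rewrite h; clear h.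
Ltac rewrite_beta_rev E :=
  let h := fresh in have h := E; cbv beta in h; rewrite -h; clear h.

Section WeakHopf.
Variables (K : fieldType) (H : algType K) (D : H -> seq (H * H)) (e : H -> K)
  (S : H -> H).
Hypothesis WH : weak_hopf D e S.
Implicit Types W : lmodType K.

Local Notation et := (eps_t D e).
Local Notation es := (eps_s D e).
Let SL := wh_antipode_lin WH.
Let eL := wh_counit_lin WH.

Lemma comul_linear W (f : H -> H -> W) : bilin f -> linear (fun h => sw2 (D h) f).
Proof.
move=> bf a h g /=; rewrite (wh_comul_lin WH a h g bf) /sw2 big_cat big_map /= scaler_sumr.
by congr (_ + _); apply: eq_bigr => p _; rewrite (linear_funZ (bilin_linl _ bf)).
Qed.

Lemma sw2_comul_mul W (f : H -> H -> W) k h : bilin f ->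
  sw2 (D (k * h)) f = \sum_(p <- D k) \sum_(q <- D h) f (p.1 * q.1) (p.2 * q.2).
Proof. by move=> bf; rewrite (wh_comul_mul WH k h bf) /sw2 /tmul2 big_allpairs_dep. Qed.

Lemma sw3_comul_l W (F : H -> H -> H -> W) s :
  sw3 (comul_l D s) F = \sum_(p <- s) \sum_(q <- D p.1) F q.1 q.2 p.2.
Proof.
by rewrite /sw3 /comul_l big_flatten big_map; apply: eq_bigr => p _; rewrite big_map.
Qed.

Lemma sw3_comul_r W (F : H -> H -> H -> W) s :
  sw3 (comul_r D s) F = \sum_(p <- s) \sum_(q <- D p.2) F p.1 q.1 q.2.
Proof.
by rewrite /sw3 /comul_r big_flatten big_map; apply: eq_bigr => p _; rewrite big_map.
Qed.

Lemma coassoc W (F : H -> H -> H -> W) h : trilin F ->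
  \sum_(p <- D h) \sum_(q <- D p.1) F q.1 q.2 p.2 =
  \sum_(p <- D h) \sum_(q <- D p.2) F p.1 q.1 q.2.
Proof. by move=> tF; have := wh_coassoc WH h tF; rewrite sw3_comul_l sw3_comul_r. Qed.

Lemma sw3_tmul3_one W (F : H -> H -> H -> W) :
  sw3 (tmul3 (one_comul1 D) (comul1_one D)) F =
    \sum_(p <- D 1) \sum_(q <- D 1) F q.1 (p.1 * q.2) p.2 /\
  sw3 (tmul3 (comul1_one D) (one_comul1 D)) F =
    \sum_(p <- D 1) \sum_(q <- D 1) F p.1 (p.2 * q.1) q.2.
Proof.
rewrite /sw3 /tmul3 /one_comul1 /comul1_one !big_allpairs_dep !big_map /=.
by split; apply: eq_bigr => p _; rewrite big_map; apply: eq_bigr => q _ /=;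
  rewrite ?mul1r ?mulr1.
Qed.

Lemma comul2_one_l W (F : H -> H -> H -> W) : trilin F ->
  \sum_(p <- D 1) \sum_(q <- D p.1) F q.1 q.2 p.2 =
  \sum_(p <- D 1) \sum_(q <- D 1) F q.1 (p.1 * q.2) p.2.
Proof.
move=> tF; have := wh_comul_unit1 WH tF.
by rewrite /comul2 sw3_comul_l (sw3_tmul3_one F).1.
Qed.

Lemma comul2_one_r W (F : H -> H -> H -> W) : trilin F ->
  \sum_(p <- D 1) \sum_(q <- D p.1) F q.1 q.2 p.2 =
  \sum_(p <- D 1) \sum_(q <- D 1) F p.1 (p.2 * q.1) q.2.
Proof.
move=> tF; have := wh_comul_unit2 WH tF.
by rewrite /comul2 sw3_comul_l (sw3_tmul3_one F).2.
Qed.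

Lemma bilin_comul_l W (F : H -> H -> H -> W) : trilin F ->
  bilin (fun h c => sw2 (D h) (fun u v => F u v c)).
Proof.
case=> F1 [F2 F3]; split => *.
- by apply: comul_linear; split => *; rewrite ?F1 ?F2.
- by rewrite /sw2 scaler_sumr -big_split; apply: eq_bigr => q _; rewrite F3.
Qed.

Lemma trilin_comul_r W (F : H -> H -> H -> H -> W) :
  (forall y u v, linear (fun x => F x y u v)) ->
  (forall x u v, linear (fun y => F x y u v)) ->
  (forall x y, bilin (F x y)) -> trilin (fun x y z => sw2 (D z) (F x y)).
Proof.
move=> F1 F2 F3; split; [|split] => *.
- by rewrite /sw2 scaler_sumr -big_split; apply: eq_bigr => q _; rewrite F1.
- by rewrite /sw2 scaler_sumr -big_split; apply: eq_bigr => q _; rewrite F2.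
- exact: comul_linear.
Qed.

Lemma counit_sum (I : Type) (r : seq I) (F : I -> H) :
  e (\sum_(i <- r) F i) = \sum_(i <- r) e (F i).
Proof. exact: (linear_fun_sum _ _ (eL : linear (e : H -> K^o))). Qed.

Lemma counitZ a h : e (a *: h) = a * e h.
Proof. exact: (linear_funZ (eL : linear (e : H -> K^o))). Qed.

Lemma eps_t_linear : linear et.
Proof.
move=> a h g; rewrite /eps_t !sw2E scaler_sumr -big_split; apply: eq_bigr => p _ /=.
by rewrite mulrDr scaler_mulr eL scalerDl scalerA.
Qed.

Lemma eps_s1 : es 1 = 1.
Proof.
by rewrite /eps_s -[RHS](wh_counit_r WH 1); apply: eq_bigr => p _; rewrite mul1r.
Qed.

Lemma sw2_comul_eps_t W (G : H -> H -> W) w : bilin G ->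
  sw2 (D (et w)) G = \sum_(p <- D 1) \sum_(q <- D p.1) e (q.1 * w) *: G q.2 p.2.
Proof.
move=> bG; have -> : et w = \sum_(p <- D 1) e (p.1 * w) *: p.2 by [].
rewrite (linear_fun_sum _ _ (comul_linear bG)).
transitivity (\sum_(p <- D 1) \sum_(q <- D p.2) e (p.1 * w) *: G q.1 q.2).
  apply: eq_bigr => p _.
  by rewrite (linear_funZ (comul_linear bG)) sw2E scaler_sumr.
have T : trilin (fun a b c => e (a * w) *: G b c).
  by case: bG => G1 G2; multilinear (eL, G1, G2).
by rewrite_beta_rev (coassoc 1 T).
Qed.

Lemma sw2_comul_eps_s W (G : H -> H -> W) w : bilin G ->
  sw2 (D (es w)) G = \sum_(p <- D 1) \sum_(q <- D p.1) e (w * p.2) *: G q.1 q.2.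
Proof.
move=> bG; have -> : es w = \sum_(p <- D 1) e (w * p.2) *: p.1 by [].
rewrite (linear_fun_sum _ _ (comul_linear bG)); apply: eq_bigr => p _.
by rewrite (linear_funZ (comul_linear bG)) sw2E scaler_sumr.
Qed.

Lemma comul_eps_t_mull W (G : H -> H -> W) w : bilin G ->
  sw2 (D (et w)) G = \sum_(q <- D 1) G (et w * q.1) q.2.
Proof.
move=> bG; have T : trilin (fun a b c => e (a * w) *: G b c).
  by case: (bG) => G1 G2; multilinear (eL, G1, G2).
rewrite sw2_comul_eps_t //; rewrite_beta (comul2_one_r T).
rewrite exchange_big /=; apply: eq_bigr => q _.
rewrite /eps_t sw2E mulr_suml (linear_fun_sum _ _ (bilin_linl _ bG)).
apply: eq_bigr => p _.
by rewrite scaler_mull (linear_funZ (bilin_linl _ bG)).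
Qed.

Lemma comul_eps_t_mulr W (G : H -> H -> W) w : bilin G ->
  sw2 (D (et w)) G = \sum_(p <- D 1) G (p.1 * et w) p.2.
Proof.
move=> bG; have T : trilin (fun a b c => e (a * w) *: G b c).
  by case: (bG) => G1 G2; multilinear (eL, G1, G2).
rewrite sw2_comul_eps_t //; rewrite_beta (comul2_one_l T); apply: eq_bigr => p _.
rewrite /eps_t sw2E mulr_sumr (linear_fun_sum _ _ (bilin_linl _ bG)).
apply: eq_bigr => q _.
by rewrite scaler_mulr (linear_funZ (bilin_linl _ bG)).
Qed.

Lemma comul_eps_s_mull W (G : H -> H -> W) w : bilin G ->
  sw2 (D (es w)) G = \sum_(q <- D 1) G q.1 (es w * q.2).
Proof.
move=> bG; have T : trilin (fun a b c => e (w * c) *: G a b).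
  by case: (bG) => G1 G2; multilinear (eL, G1, G2).
rewrite sw2_comul_eps_s //; rewrite_beta (comul2_one_l T).
rewrite exchange_big /=; apply: eq_bigr => q _.
rewrite /eps_s sw2E mulr_suml (linear_fun_sum _ _ (bilin_linr _ bG)).
apply: eq_bigr => p _.
by rewrite scaler_mull (linear_funZ (bilin_linr _ bG)).
Qed.

Lemma comul_eps_s_mulr W (G : H -> H -> W) w : bilin G ->
  sw2 (D (es w)) G = \sum_(p <- D 1) G p.1 (p.2 * es w).
Proof.
move=> bG; have T : trilin (fun a b c => e (w * c) *: G a b).
  by case: (bG) => G1 G2; multilinear (eL, G1, G2).
rewrite sw2_comul_eps_s //; rewrite_beta (comul2_one_r T); apply: eq_bigr => p _.
rewrite /eps_s sw2E mulr_sumr (linear_fun_sum _ _ (bilin_linr _ bG)).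
apply: eq_bigr => q _.
by rewrite scaler_mulr (linear_funZ (bilin_linr _ bG)).
Qed.

Lemma comul_eps_t_mul W (G : H -> H -> W) w k : bilin G ->
  sw2 (D (et w * k)) G = sw2 (D k) (fun a b => G (et w * a) b).
Proof.
move=> bG; case: (bG) => G1 G2.
rewrite (sw2_comul_mul _ _ bG) exchange_big /=.
transitivity (\sum_(p <- D k) \sum_(q <- D 1) G (et w * q.1 * p.1) (q.2 * p.2)).
  apply: eq_bigr => p _.
  have bGp : bilin (fun a b => G (a * p.1) (b * p.2)) by multilinear (G1, G2).
  exact: (comul_eps_t_mull w bGp).
have bGw : bilin (fun a b => G (et w * a) b) by multilinear (G1, G2).
rewrite -{2}(mul1r k) (sw2_comul_mul _ _ bGw) exchange_big /=.
by apply: eq_bigr => p _; apply: eq_bigr => q _; rewrite !mulrA.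
Qed.

Lemma eps_t_mul_eps_t h g : et (h * et g) = et (h * g).
Proof.
rewrite /eps_t !sw2E; apply: eq_bigr => p _; congr (_ *: _).
rewrite mulr_sumr mulr_sumr counit_sum.
have := wh_eps_mul2 WH (p.1 * h) 1 g; rewrite mulr1 -mulrA sw2E => <-.
by apply: eq_bigr => q _; rewrite !scaler_mulr counitZ mulrC !mulrA.
Qed.

Lemma eps_s_eps_s_mul h g : es (es h * g) = es (h * g).
Proof.
rewrite /eps_s !sw2E; apply: eq_bigr => p _; congr (_ *: _).
rewrite mulr_suml mulr_suml counit_sum.
have := wh_eps_mul2 WH h 1 (g * p.2); rewrite mulr1 mulrA sw2E => <-.
by apply: eq_bigr => q _; rewrite !scaler_mull counitZ !mulrA.
Qed.

Lemma adjoint_eps_t h w : sw2 (D h) (fun u v => u * et w * S v) = et (h * et w).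
Proof.
have bT : bilin (fun u v : H => u * S v) by multilinear SL.
have bF : bilin (fun u v : H => u * et w * S v) by multilinear SL.
rewrite -(wh_antipode_t WH (h * et w)) (sw2_comul_mul _ _ bT).
rewrite -{1}(mulr1 h) (sw2_comul_mul _ _ bF); apply: eq_bigr => p _ /=.
have bG : bilin (fun a b => p.1 * a * S (p.2 * b)) by multilinear SL.
symmetry; etransitivity; first exact: (comul_eps_t_mulr w bG).
by apply: eq_bigr => q _; rewrite !mulrA.
Qed.

Lemma adjoint_eps_s g w : sw2 (D g) (fun u v => S u * es w * v) = es (es w * g).
Proof.
have bT : bilin (fun u v : H => S u * v) by multilinear SL.
have bF : bilin (fun u v : H => S u * es w * v) by multilinear SL.
rewrite -(wh_antipode_s WH (es w * g)) (sw2_comul_mul _ _ bT) exchange_big /=.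
rewrite -{1}(mul1r g) (sw2_comul_mul _ _ bF) exchange_big /=; apply: eq_bigr => q _ /=.
have bG : bilin (fun a b => S (a * q.1) * (b * q.2)) by multilinear SL.
symmetry; etransitivity; first exact: (comul_eps_s_mull w bG).
by apply: eq_bigr => p _; rewrite !mulrA.
Qed.

(* Both products are [Delta^2(1)] contracted with [eps(_ g)] and [eps(h _)] in
   the outer legs, written via its two factorizations. *)
Lemma eps_s_eps_t_comm h g : es h * et g = et g * es h.
Proof.
have T : trilin (fun a (b : H) c => (e (a * g) * e (h * c)) *: b) by multilinear eL.
have U := comul2_one_r T; rewrite (comul2_one_l T) in U; cbv beta in U.
rewrite /eps_s /eps_t !sw2E mulr_suml mulr_suml.
transitivity (\sum_(p <- D 1) \sum_(q <- D 1) (e (q.1 * g) * e (h * p.2)) *: (p.1 * q.2)).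
  apply: eq_bigr => p _; rewrite mulr_sumr; apply: eq_bigr => q _.
  by rewrite scaler_mull scaler_mulr scalerA mulrC.
rewrite U; apply: eq_bigr => p _; rewrite mulr_sumr; apply: eq_bigr => q _.
by rewrite scaler_mull scaler_mulr scalerA.
Qed.

Lemma antipode_eps_tE h : S h = sw2 (D h) (fun u v => S u * et v).
Proof.
have T : trilin (fun u v w : H => S u * v * S w) by multilinear SL.
rewrite -(wh_antipode3 WH h) /comul2 sw3_comul_l; rewrite_beta (coassoc h T).
apply: eq_bigr => p _.
by rewrite -(wh_antipode_t WH) sw2E mulr_sumr; apply: eq_bigr => q _; rewrite mulrA.
Qed.

Lemma antipode_eps_sE h : S h = sw2 (D h) (fun u v => es u * S v).
Proof.
rewrite -(wh_antipode3 WH h) /comul2 sw3_comul_l sw2E; apply: eq_bigr => p _.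
by rewrite -(wh_antipode_s WH) sw2E mulr_suml.
Qed.

Lemma antipode_mulE h g :
  S (h * g) = \sum_(p <- D h) \sum_(p' <- D g) es (p.1 * p'.1) * S p'.2 * S p.2.
Proof.
have bA : bilin (fun u v => S u * et v) by multilinear (SL, eps_t_linear).
rewrite (antipode_eps_tE (h * g)) (sw2_comul_mul _ _ bA).
transitivity (\sum_(p <- D h) \sum_(q <- D p.2) \sum_(p' <- D g) \sum_(q' <- D p'.2)
   S (p.1 * p'.1) * q.1 * q'.1 * S q'.2 * S q.2).
  apply: eq_bigr => p _ /=.
  transitivity (\sum_(p' <- D g) \sum_(q <- D p.2) \sum_(q' <- D p'.2)
    S (p.1 * p'.1) * q.1 * q'.1 * S q'.2 * S q.2); last by rewrite exchange_big.
  apply: eq_bigr => p' _ /=.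
  rewrite -eps_t_mul_eps_t -adjoint_eps_t -(wh_antipode_t WH p'.2) !sw2E mulr_sumr.
  apply: eq_bigr => q _; rewrite mulr_sumr mulr_suml mulr_sumr.
  by apply: eq_bigr => q' _; rewrite !mulrA.
transitivity (\sum_(p <- D h) \sum_(q <- D p.2) \sum_(p' <- D g) \sum_(q' <- D p'.1)
   S (p.1 * q'.1) * q.1 * q'.2 * S p'.2 * S q.2).
  apply: eq_bigr => p _; apply: eq_bigr => q _.
  have T : trilin (fun a b c => S (p.1 * a) * q.1 * b * S c * S q.2) by multilinear SL.
  by rewrite (coassoc g T).
transitivity (\sum_(p <- D h) \sum_(q <- D p.1) \sum_(p' <- D g) \sum_(q' <- D p'.1)
   S (q.1 * q'.1) * q.2 * q'.2 * S p'.2 * S p.2).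
  have T : trilin (fun a b c => \sum_(p' <- D g) \sum_(q' <- D p'.1)
     S (a * q'.1) * b * q'.2 * S p'.2 * S c).
    by apply: trilin_sum => p'; apply: trilin_sum => q'; multilinear SL.
  by rewrite (coassoc h T).
apply: eq_bigr => p _; rewrite exchange_big /=; apply: eq_bigr => p' _.
have bT : bilin (fun u v : H => S u * v) by multilinear SL.
rewrite -(wh_antipode_s WH) (sw2_comul_mul _ _ bT) !mulr_suml; apply: eq_bigr => q _.
by rewrite !mulr_suml; apply: eq_bigr => q' _; rewrite !mulrA.
Qed.

Lemma antipodeM h g : S (h * g) = S g * S h.
Proof.
rewrite antipode_mulE.
transitivity (\sum_(p <- D h) \sum_(p' <- D g) \sum_(q' <- D p'.1)
   S q'.1 * es p.1 * q'.2 * S p'.2 * S p.2).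
  apply: eq_bigr => p _; apply: eq_bigr => p' _.
  by rewrite -eps_s_eps_s_mul -adjoint_eps_s sw2E !mulr_suml.
transitivity (\sum_(p <- D h) \sum_(p' <- D g) S p'.1 * et p'.2 * es p.1 * S p.2).
  apply: eq_bigr => p _.
  have T : trilin (fun a b c => S a * es p.1 * b * S c * S p.2) by multilinear SL.
  rewrite_beta (coassoc g T); apply: eq_bigr => p' _.
  rewrite -[S p'.1 * et p'.2 * es p.1]mulrA -eps_s_eps_t_comm mulrA.
  rewrite -(wh_antipode_t WH p'.2) sw2E [in RHS]mulr_sumr [in RHS]mulr_suml.
  by apply: eq_bigr => q' _; rewrite !mulrA.
rewrite exchange_big /= (antipode_eps_tE g) sw2E [in RHS]mulr_suml; apply: eq_bigr => p' _.
rewrite (antipode_eps_sE h) sw2E [in RHS]mulr_sumr.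
by apply: eq_bigr => p _; rewrite !mulrA.
Qed.

Lemma antipode_eps_s x : S (es x) = et (es x).
Proof.
have T : trilin (fun u v w : H => S u * v * S w) by multilinear SL.
have T' : trilin (fun a b c : H => S a * b * S (c * es x)) by multilinear SL.
have bT : bilin (fun u v : H => u * S v) by multilinear SL.
rewrite -(wh_antipode3 WH (es x)) /comul2 sw3_comul_l.
transitivity (sw2 (D (es x)) (fun a c => sw2 (D a) (fun u v => S u * v * S c)));
  first by [].
rewrite (comul_eps_s_mulr x (bilin_comul_l T)); rewrite_beta (comul2_one_r T').
transitivity (es 1 * et (es x)); last by rewrite eps_s1 mul1r.
rewrite -(wh_antipode_t WH (es x)) (comul_eps_s_mulr x bT).
rewrite -(wh_antipode_s WH 1) !sw2E [in RHS]mulr_suml; apply: eq_bigr => p _.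
by rewrite [in RHS]mulr_sumr; apply: eq_bigr => q _; rewrite !mulrA.
Qed.

End WeakHopf.

Section PartialSmash.
Variables (K : fieldType) (H A : algType K) (D : H -> seq (H * H)) (e : H -> K)
  (S : H -> H) (act : H -> A -> A).
Implicit Types W : lmodType K.

Local Notation in_psmash := (in_psmash D e S act).
Local Notation smash_eq := (smash_eq D e S act).
Local Notation gen := (psmash_gen D act).

Lemma sw2_smash_mul W (f : A -> H -> W) s t :
  sw2 (smash_mul D act s t) f =
  \sum_(p <- s) \sum_(q <- t) \sum_(r <- D p.2) f (p.1 * act r.1 q.1) (r.2 * q.2).
Proof.
rewrite /smash_mul /sw2 big_flatten big_map; apply: eq_bigr => p _.
by rewrite big_flatten big_map; apply: eq_bigr => q _; rewrite big_map.
Qed.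

Lemma sw2_psmash_gen W (f : A -> H -> W) a h :
  sw2 (gen a h) f = \sum_(p <- D h) f (a * act p.1 1) p.2.
Proof. by rewrite /psmash_gen /sw2 big_map. Qed.

Hypothesis WH : weak_hopf D e S.
Hypothesis PMA : partial_module_algebra D act.

Let act_lin := (pma_bilin PMA).1.

Lemma act_comul1 k b : act k b = \sum_(p <- D 1) act p.1 1 * act (p.2 * k) b.
Proof. by have := pma_assoc PMA 1 k b; rewrite !(pma_unit PMA). Qed.

Lemma act_comul_act1 W (f : A -> H -> W) a k g : bilin f ->
  \sum_(p <- D 1) \sum_(r <- D p.2) f (a * act p.1 1 * act r.1 (act k 1)) (r.2 * g) =
  \sum_(p <- D 1) \sum_(q <- D 1) f (a * act p.1 1 * act (p.2 * q.1 * k) 1) (q.2 * g).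
Proof.
move=> bf; case: (bf) => f1 f2; have lf := fun v => bilin_linl v bf.
transitivity (\sum_(p <- D 1) \sum_(r <- D p.2) \sum_(s <- D r.1)
  f (a * act p.1 1 * (act s.1 1 * act (s.2 * k) 1)) (r.2 * g)).
  apply: eq_bigr => p _; apply: eq_bigr => r _.
  by rewrite (pma_assoc PMA) sw2E mulr_sumr (linear_fun_sum _ _ (lf _)).
transitivity (\sum_(p <- D 1) \sum_(r <- D p.2) \sum_(s <- D r.2)
  f (a * act p.1 1 * (act r.1 1 * act (s.1 * k) 1)) (s.2 * g)).
  apply: eq_bigr => p _.
  have T : trilin (fun x y z => f (a * act p.1 1 * (act x 1 * act (y * k) 1)) (z * g)).
    by multilinear (act_lin, f1, f2).
  exact: (coassoc WH p.2 T).
transitivity (\sum_(n <- D 1) \sum_(m <- D n.1) \sum_(s <- D n.2)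
  f (a * act m.1 1 * (act m.2 1 * act (s.1 * k) 1)) (s.2 * g)).
  have T : trilin (fun x y z => sw2 (D z)
     (fun u v => f (a * act x 1 * (act y 1 * act (u * k) 1)) (v * g))).
    by apply: (trilin_comul_r WH); multilinear (act_lin, f1, f2).
  symmetry; exact: (coassoc WH 1 T).
transitivity (\sum_(n <- D 1) \sum_(s <- D n.2)
  f (a * act n.1 1 * act (s.1 * k) 1) (s.2 * g)).
  apply: eq_bigr => n _; rewrite exchange_big /=; apply: eq_bigr => s _.
  have act_n1 := pma_mul PMA n.1 1 1; rewrite mulr1 in act_n1.
  rewrite [in RHS]act_n1 sw2E mulr_sumr mulr_suml (linear_fun_sum _ _ (lf _)).
  by apply: eq_bigr => m _; rewrite !mulrA.
have T : trilin (fun x y z => f (a * act x 1 * act (y * k) 1) (z * g)).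
  by multilinear (act_lin, f1, f2).
by rewrite_beta_rev (coassoc WH 1 T); rewrite_beta (comul2_one_r WH T).
Qed.

Lemma psmash_gen_factor W (f : A -> H -> W) a h : bilin f ->
  sw2 (smash_mul D act (gen a 1) (gen 1 h)) f = sw2 (gen a h) f.
Proof.
move=> bf; case: (bf) => f1 f2.
rewrite sw2_smash_mul sw2_psmash_gen /psmash_gen !big_map /=.
under eq_bigr => p _ do rewrite big_map.
transitivity (\sum_(w <- D h) \sum_(p <- D 1) \sum_(q <- D 1)
  f (a * act p.1 1 * act (p.2 * q.1 * w.1) 1) (q.2 * w.2)).
  rewrite exchange_big /=; apply: eq_bigr => w _.
  rewrite -act_comul_act1 //; apply: eq_bigr => p _.
  by apply: eq_bigr => r _; rewrite mul1r.
transitivity (\sum_(p <- D 1) \sum_(w <- D h) f (a * act p.1 1 * act (p.2 * w.1) 1) w.2).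
  rewrite exchange_big /=; apply: eq_bigr => p _.
  have bL : bilin (fun u v => f (a * act p.1 1 * act (p.2 * u) 1) v).
    by multilinear (act_lin, f1, f2).
  transitivity (sw2 (D (1 * h)) (fun u v => f (a * act p.1 1 * act (p.2 * u) 1) v));
    last by rewrite mul1r.
  rewrite (sw2_comul_mul WH _ _ bL) exchange_big /=.
  by apply: eq_bigr => w _; apply: eq_bigr => q _; rewrite !mulrA.
rewrite exchange_big /=; apply: eq_bigr => w _.
rewrite [in RHS]act_comul1 mulr_sumr (linear_fun_sum _ _ (bilin_linl _ bf)).
by apply: eq_bigr => p _; rewrite mulrA.
Qed.

Lemma psmash_alg_morph_eq (B : algType K) (Phi Psi : seq (A * H) -> B) :
  psmash_alg_morph D e S act Phi -> psmash_alg_morph D e S act Psi ->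
  (forall a, Phi (gen a 1) = Psi (gen a 1)) -> (forall h, Phi (gen 1 h) = Psi (gen 1 h)) ->
  forall s, in_psmash s -> Phi s = Psi s.
Proof.
move=> [Phi_eq [PhiD [PhiZ [PhiM _]]]] [Psi_eq [PsiD [PsiZ [PsiM _]]]] eq_a eq_h s.
have ps0 := ps_zero D e S act.
have morph0 (F : seq (A * H) -> B) : (forall s t, in_psmash s -> in_psmash t ->
    F (s ++ t) = F s + F t) -> F [::] = 0.
  by move=> FD; apply: (@addrI _ (F [::])); rewrite addr0 -(FD _ _ ps0 ps0).
elim: s / => [a h | | s t Hs IHs Ht IHt | c s Hs IH | s t Hs IHs Ht IHt | s t Hs IH st].
- have gen_ah : smash_eq (smash_mul D act (gen a 1) (gen 1 h)) (gen a h).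
    by move=> W f bf _; exact: psmash_gen_factor.
  have gen_mul : in_psmash (smash_mul D act (gen a 1) (gen 1 h)) by do 2!constructor.
  by rewrite -(Phi_eq _ _ gen_mul gen_ah) -(Psi_eq _ _ gen_mul gen_ah)
    PhiM ?PsiM ?eq_a ?eq_h //; constructor.
- by rewrite !morph0.
- by rewrite PhiD ?PsiD // IHs IHt.
- by rewrite PhiZ ?PsiZ // IH.
- by rewrite PhiM ?PsiM // IHs IHt.
- by rewrite -(Phi_eq _ _ Hs st) -(Psi_eq _ _ Hs st).
Qed.

End PartialSmash.

Section CovariantPair.
Variables (K : fieldType) (H A B : algType K) (D : H -> seq (H * H)) (e : H -> K)
  (S : H -> H) (act : H -> A -> A) (pi : H -> B) (phi : A -> B).

Definition smash_lift (s : seq (A * H)) : B := sw2 s (fun a h => phi a * pi h).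

Hypothesis WH : weak_hopf D e S.
Hypothesis PMA : partial_module_algebra D act.
Hypothesis CP : covariant_pair D S act phi pi.

Local Notation et := (eps_t D e).
Local Notation es := (eps_s D e).
Let SL := wh_antipode_lin WH.
Let PR : partial_rep D S pi := CP.2.1.
Let pi_lin := pr_lin PR.
Let phi_lin := CP.1.1.
Let phiM := CP.1.2.1.
Let phi1 := CP.1.2.2.
Let CP1 := CP.2.2.1.
Let CP2 := CP.2.2.2.

Lemma pi_pr6 h : pi h = \sum_(p <- D h) \sum_(q <- D p.1) pi q.1 * pi (S q.2) * pi p.2.
Proof. by rewrite (pr6 PR h) /comul2 sw3_comul_l. Qed.

Lemma phi_act1 h : phi (act h 1) = sw2 (D h) (fun u v => pi u * pi (S v)).
Proof. by rewrite CP1; apply: eq_bigr => p _; rewrite phi1 mulr1. Qed.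

Lemma pi_comul1 : \sum_(p <- D 1) pi p.1 * pi (S p.2) = 1.
Proof. by rewrite -[RHS]phi1 -[in RHS](pma_unit PMA 1) phi_act1. Qed.

Lemma pi_eps_tM w k : pi (et w * k) = pi (et w) * pi k.
Proof.
have T : trilin (fun a b c => pi a * pi (S b) * pi c) by multilinear (pi_lin, SL).
rewrite (pi_pr6 (et w * k)).
transitivity (sw2 (D (et w * k))
  (fun a c => sw2 (D a) (fun u v => pi u * pi (S v) * pi c))); first by [].
rewrite (comul_eps_t_mul WH _ _ (bilin_comul_l WH T)).
transitivity (sw2 (D k)
  (fun a c => sw2 (D a) (fun u v => pi (et w * u) * pi (S v) * pi c))).
  apply: eq_bigr => p _.
  have bG : bilin (fun u v => pi u * pi (S v) * pi p.2) by multilinear (pi_lin, SL).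
  exact: (comul_eps_t_mul WH _ _ bG).
rewrite (pi_pr6 k) sw2E mulr_sumr; apply: eq_bigr => p _.
have := pr2 PR (et w) p.1; rewrite !sw2E mulr_sumr => pr2_w.
transitivity ((\sum_(q <- D p.1) pi (et w) * pi q.1 * pi (S q.2)) * pi p.2).
  by rewrite pr2_w mulr_suml.
by rewrite mulr_suml; apply: eq_bigr => q _; rewrite !mulrA.
Qed.

Lemma phi_pi_balanced : smash_balanced D e S act (fun a h => phi a * pi h).
Proof.
move=> x a h.
have bG : bilin (fun u v => pi u * pi (S v)) by multilinear (pi_lin, SL).
rewrite phiM phi_act1 (comul_eps_s_mull WH x bG).
transitivity (phi a * sw2 (D 1) (fun u v => pi u * pi (S v * S (es x))) * pi h).
  by congr (_ * _ * _); apply: eq_bigr => q _; rewrite (antipodeM WH).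
rewrite -(pr4 PR) sw2E -mulr_suml pi_comul1 mul1r.
by rewrite (antipode_eps_s WH x) pi_eps_tM mulrA.
Qed.

Lemma phi_act_pi k b g :
  sw2 (D k) (fun u v => phi (act u b) * pi (v * g)) = pi k * phi b * pi g.
Proof.
transitivity (\sum_(r <- D k) \sum_(w <- D r.1)
  pi w.1 * phi b * pi (S w.2) * pi (r.2 * g)).
  by apply: eq_bigr => r _; rewrite CP1 sw2E mulr_suml.
have T : trilin (fun x y z => pi x * phi b * pi (S y) * pi (z * g)).
  by multilinear (pi_lin, SL).
rewrite_beta (coassoc WH k T).
transitivity (\sum_(r <- D k) \sum_(w <- D r.2)
  pi r.1 * pi (S w.1) * pi w.2 * phi b * pi g).
  apply: eq_bigr => r _.
  transitivity (pi r.1 * phi b * sw2 (D r.2) (fun u v => pi (S u) * pi (v * g))).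
    by rewrite sw2E mulr_sumr; apply: eq_bigr => w _; rewrite !mulrA.
  rewrite -(pr5 PR).
  transitivity (pi r.1 * sw2 (D r.2) (fun u v => phi b * pi (S u) * pi v) * pi g).
    rewrite !sw2E mulr_sumr [in RHS]mulr_sumr [in RHS]mulr_suml.
    by apply: eq_bigr => w _; rewrite !mulrA.
  rewrite CP2 sw2E mulr_sumr mulr_suml.
  by apply: eq_bigr => w _; rewrite !mulrA.
have T' : trilin (fun x y z => pi x * pi (S y) * pi z * phi b * pi g).
  by multilinear (pi_lin, SL).
rewrite_beta_rev (coassoc WH k T'); rewrite (pi_pr6 k) !mulr_suml.
by apply: eq_bigr => r _; rewrite !mulr_suml.
Qed.

Lemma phi_pi_bilin : bilin (fun (a : A) (h : H) => phi a * pi h).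
Proof. by multilinear (phi_lin, pi_lin). Qed.

Lemma smash_lift_eq s t : smash_eq D e S act s t -> smash_lift s = smash_lift t.
Proof. by move=> st; apply: st; [exact: phi_pi_bilin | exact: phi_pi_balanced]. Qed.

Lemma smash_lift_cat s t : smash_lift (s ++ t) = smash_lift s + smash_lift t.
Proof. by rewrite /smash_lift /sw2 big_cat. Qed.

Lemma smash_liftZ c s : smash_lift (smash_scale c s) = c *: smash_lift s.
Proof.
rewrite /smash_lift /smash_scale /sw2 big_map scaler_sumr; apply: eq_bigr => p _.
by rewrite (linear_funZ (bilin_linl _ phi_pi_bilin)).
Qed.

Lemma smash_liftM s t :
  smash_lift (smash_mul D act s t) = smash_lift s * smash_lift t.
Proof.
rewrite /smash_lift sw2_smash_mul !sw2E mulr_suml; apply: eq_bigr => p _.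
rewrite mulr_sumr; apply: eq_bigr => q _.
transitivity (phi p.1 * sw2 (D p.2) (fun u v => phi (act u q.1) * pi (v * q.2))).
  by rewrite sw2E mulr_sumr; apply: eq_bigr => r _; rewrite phiM mulrA.
by rewrite phi_act_pi !mulrA.
Qed.

Lemma smash_lift_gen a h : smash_lift (psmash_gen D act a h) = phi a * pi h.
Proof.
rewrite /smash_lift sw2_psmash_gen (pi_pr6 h) mulr_sumr; apply: eq_bigr => p _.
by rewrite phiM phi_act1 sw2E -mulrA mulr_suml.
Qed.

Lemma smash_lift_alg_morph : psmash_alg_morph D e S act smash_lift.
Proof.
split; [|split; [|split; [|split]]].
- by move=> s t _; exact: smash_lift_eq.
- by move=> s t _ _; exact: smash_lift_cat.
- by move=> c s _; exact: smash_liftZ.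
- by move=> s t _ _; exact: smash_liftM.
- by rewrite smash_lift_gen phi1 (pr1 PR) mulr1.
Qed.

End CovariantPair.

Theorem theorem3p14 (K : fieldType) (H A B : algType K)
    (D : H -> seq (H * H)) (e : H -> K) (S : H -> H)
    (act : H -> A -> A) (pi : H -> B) (phi : A -> B) :
  weak_hopf D e S ->
  sym_partial_module_algebra D act ->
  partial_rep D S pi ->
  alg_morph phi ->
  covariant_pair D S act phi pi ->
  exists Phi : seq (A * H) -> B,
    [/\ psmash_alg_morph D e S act Phi,
        (forall h, Phi (psmash_gen D act 1 h) = pi h),
        (forall a, Phi (psmash_gen D act a 1) = phi a) &
        (forall Psi : seq (A * H) -> B,
           psmash_alg_morph D e S act Psi ->
           (forall h, Psi (psmash_gen D act 1 h) = pi h) ->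
           (forall a, Psi (psmash_gen D act a 1) = phi a) ->
           forall s, in_psmash D e S act s -> Psi s = Phi s)].
Proof.
move=> WH [PMA _] _ _ CP.
have [[_ [_ phi1]] [PR _]] := CP.
have lift_gen := smash_lift_gen CP.
have lift_morph := smash_lift_alg_morph WH PMA CP.
exists (smash_lift pi phi); split=> //.
- by move=> h; rewrite lift_gen phi1 mul1r.
- by move=> a; rewrite lift_gen (pr1 PR) mulr1.
move=> Psi Psi_morph Psi_pi Psi_phi.
apply: (psmash_alg_morph_eq WH PMA Psi_morph lift_morph) => [a | h].
- by rewrite Psi_phi lift_gen (pr1 PR) mulr1.
- by rewrite Psi_pi lift_gen phi1 mul1r.
Qed.
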